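(* Let $k$ be a field and $\mathsf{E}$ a lower finite $k$-linear category. Then the contramodule forgetful functor $\Theta_\mathsf{E}$ from left $\mathcal{C}_\mathsf{E}$-contramodules to left $\mathsf{E}$-modules is an equivalence of categories.
   Context: A small $k$-linear category $\mathsf{E}$ has $k$-vector spaces $\operatorname{Hom}_\mathsf{E}(x,y)$, $k$-bilinear associative composition and identities with $\mathrm{id}_x\ne0$. A left $\mathsf{E}$-module is a $k$-linear functor $\mathsf{E}\to k\text{-Vect}$. Write $x\preceq y$ if there are $n\ge1$ and objects $x=z_0,\dots,z_n=y$ with $\operatorname{Hom}_\mathsf{E}(z_{i-1},z_i)\neq0$ for all $i$. $\mathsf{E}$ is locally finite if all $\operatorname{Hom}_\mathsf{E}(x,y)$ are finite-dimensional and every $\{z:x\preceq z\preceq y\}$ is finite; it is lower finite if it is locally finite and for every object $y$ the set $\{x: x\preceq y\}$ is finite. $\mathcal{C}_\mathsf{E}=\bigoplus_{x,y}\mathcal{C}^{x,y}$, $\mathcal{C}^{x,y}=\operatorname{Hom}_\mathsf{E}(x,y)^*$; counit zero on $\mathcal{C}^{x,y}$ for $x\ne y$, evaluation at $\mathrm{id}_x$ on $\mathcal{C}^{x,x}$; comultiplication $\mathcal{C}^{x,y}\to\bigoplus_z\mathcal{C}^{x,z}\otimes\mathcal{C}^{z,y}$ dual to composition $g\otimes h\mapsto hg$. A left contramodule over a coalgebra $(\mathcal{C},\mu,\epsilon)$ is a space $\mathfrak{P}$ with $\pi:\operatorname{Hom}_k(\mathcal{C},\mathfrak{P})\to\mathfrak{P}$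 such that $\pi(c\mapsto\epsilon(c)p)=p$ and, under $\operatorname{Hom}_k(\mathcal{C},\operatorname{Hom}_k(\mathcal{C},\mathfrak{P}))\cong\operatorname{Hom}_k(\mathcal{C}\otimes\mathcal{C},\mathfrak{P})$, $f\mapsto(c'\otimes c''\mapsto f(c'')(c'))$, $\pi(c\mapsto\pi(f(c)))=\pi(f\circ\mu)$; morphisms commute with $\pi$. Set $\varphi\cdot p=\pi(c\mapsto\varphi(c)p)$ for $\varphi\in\mathcal{C}^*$. With $e_x$ evaluation at $\mathrm{id}_x$ on $\mathcal{C}^{x,x}$ (zero elsewhere) and $\mathrm{ev}_f$, for $f\in\operatorname{Hom}_\mathsf{E}(x,y)$, evaluation at $f$ on $\mathcal{C}^{x,y}$ (zero elsewhere): $\Theta_\mathsf{E}(\mathfrak{P})(x)=e_x\cdot\mathfrak{P}$ (with $\mathfrak{P}\cong\prod_xe_x\cdot\mathfrak{P}$), $f$ acting by $p\mapsto\mathrm{ev}_f\cdot p$; on morphisms it takes restrictions. *)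

From HB Require Import structures.
From mathcomp Require Import all_boot all_order all_algebra.
From Stdlib Require Import ClassicalEpsilon ProofIrrelevance FunctionalExtensionality.
Set Implicit Arguments. Unset Strict Implicit. Unset Printing Implicit Defensive.
Import GRing.Theory.
Local Open Scope ring_scope.

Section KCat.
Variable k : fieldType.

Record kcat := KCat {
  Obj : Type;
  Hom : Obj -> Obj -> vectType k;
  comp : forall x y z : Obj, Hom y z -> Hom x y -> Hom x z;
  idm : forall x : Obj, Hom x x;
  comp_linl : forall x y z (g : Hom x y), linear (fun h : Hom y z => comp h g);
  comp_linr : forall x y z (h : Hom y z), linear (fun g : Hom x y => comp h g);
  compA : forall x y z w (f : Hom x y) (g : Hom y z) (h : Hom z w),
      comp h (comp g f) = comp (comp h g) f;
  comp1m : forall x y (f : Hom x y), comp (idm y) f = f;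
  compm1 : forall x y (f : Hom x y), comp f (idm x) = f;
  idm_neq0 : forall x, idm x != 0
}.
End KCat.
Arguments comp {_ _ x y z}.
Arguments idm {_ _}.

Section C.
Variables (k : fieldType) (E : kcat k).
Local Notation Obj := (Obj E).
Local Notation Hom := (@Hom _ E).

Definition C (x y : Obj) : vectType k := 'Hom(Hom x y, k^o).
Definition linfam (P : lmodType k) (F : forall x y : Obj, C x y -> P) :=
  forall x y, linear (F x y).
Definition LinFam (P : lmodType k) := {F : forall x y : Obj, C x y -> P | linfam F}.

Definition delta (x y : Obj) (f : Hom x y) (a b : Obj) : Hom a b :=
  match excluded_middle_informative (x = a) with
  | left ea =>
    match excluded_middle_informative (y = b) with
    | left eb => eq_rect y (fun b => Hom a b) (eq_rect x (fun a => Hom a y) f a ea) b eb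
    | right _ => 0
    end
  | right _ => 0
  end.

Lemma evfam_lin (u : forall a b, Hom a b) : linfam (fun a b (c : C a b) => (c (u a b) : k^o)).
Proof. by move=> a b r c d; rewrite add_lfunE scale_lfunE. Qed.
Definition evfam u : LinFam k^o := exist _ _ (evfam_lin u).

Definition ee (x : Obj) := evfam (delta (idm x)).
Definition evf (x y : Obj) (f : Hom x y) := evfam (delta f).
Definition eps := evfam (fun a b => delta (idm a) a b).

Lemma cdot_lin (P : lmodType k) (phi : LinFam k^o) (p : P) :
  linfam (fun a b c => (sval phi a b c : k) *: p).
Proof.
move=> a b r c d /=; rewrite (proj2_sig phi a b) scalerDl scalerA //.
Qed.
Definition cdot (P : lmodType k) (pi : LinFam P -> P) (phi : LinFam k^o) (p : P) :=
  pi (exist _ _ (cdot_lin phi p)).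
End C.

Section Contra.
Variables (k : fieldType) (E : kcat k).
Local Notation Obj := (Obj E).
Local Notation Hom := (@Hom _ E).
Local Notation C := (@C _ E).

Definition hom_nz (x y : Obj) := exists f : Hom x y, f != 0.
Inductive prec : Obj -> Obj -> Prop :=
| prec_one x y : hom_nz x y -> prec x y
| prec_step x y z : prec x y -> hom_nz y z -> prec x z.

Definition lower_finite :=
  (forall x y, exists s : seq Obj, forall z, prec x z -> prec z y -> List.In z s) /\
  (forall y, exists s : seq Obj, forall x, prec x y -> List.In x s).

Definition interval (x y : Obj) : seq Obj :=
  match excluded_middle_informative (exists s : seq Obj,
      List.NoDup s /\ forall z, List.In z s <-> (prec x z /\ prec z y)) with
  | left H => proj1_sig (constructive_indefinite_description _ H)
  | right _ => [::]
  end.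

Definition bvec (V : vectType k) (i : 'I_(\dim (fullv : {vspace V}))) : V :=
  (vbasis fullv)`_i.
Definition dualb (V : vectType k) (i : 'I_(\dim (fullv : {vspace V}))) : 'Hom(V, k^o) :=
  linfun (fun v : V => (coord (vbasis fullv) i v : k^o)).

Definition fmu (P : lmodType k) (F : forall x y, C x y -> forall a b, C a b -> P)
    (x y : Obj) (phi : C x y) : P :=
  \sum_(z <- interval x y)
    \sum_(i < \dim (fullv : {vspace Hom x z}))
      \sum_(j < \dim (fullv : {vspace Hom z y}))
        (phi (comp (bvec j) (bvec i)) : k) *: F z y (dualb j) x z (dualb i).

Definition is_contra (P : lmodType k) (pi : LinFam E P -> P) :=
  (forall (a : k) (F G : LinFam E P)
      (H : linfam (fun x y c => a *: sval F x y c + sval G x y c)),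
      pi (exist _ _ H) = a *: pi F + pi G) /\
  (forall p : P, cdot pi (eps E) p = p) /\
  (forall (F : forall x y, C x y -> forall a b, C a b -> P)
      (HF1 : forall x y c, linfam (F x y c))
      (HF2 : forall x y a b (c' : C a b), linear (fun c : C x y => F x y c a b c'))
      (H2 : linfam (fun x y c => pi (exist _ _ (HF1 x y c))))
      (H3 : linfam (fmu F)),
      pi (exist _ _ H2) = pi (exist _ _ H3)).

Record contra := Contra {
  cv : lmodType k;
  cpi : LinFam E cv -> cv;
  cax : is_contra cpi
}.

Definition is_cmorph (P Q : contra) (g : cv P -> cv Q) :=
  linear g /\
  forall (F : LinFam E (cv P)) (H : linfam (fun x y c => g (sval F x y c))),
    g (cpi F) = cpi (exist _ _ H).

End Contra.

Section Theta.
Variables (k : fieldType) (E : kcat k).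
Local Notation Obj := (Obj E).
Local Notation Hom := (@Hom _ E).

Record kmod := KMod {
  Mv : Obj -> lmodType k;
  mact : forall x y : Obj, Hom x y -> Mv x -> Mv y
}.

Definition is_kmod (M : kmod) :=
  (forall x y (m : Mv M x), linear (fun f : Hom x y => mact f m)) /\
  (forall x y (f : Hom x y), linear (@mact M x y f)) /\
  (forall x (m : Mv M x), mact (idm x) m = m) /\
  (forall x y z (g : Hom x y) (h : Hom y z) (m : Mv M x),
      mact (comp h g) m = mact h (mact g m)).

Definition is_kmorph (M N : kmod) (eta : forall x, Mv M x -> Mv N x) :=
  (forall x, linear (eta x)) /\
  (forall x y (f : Hom x y) (m : Mv M x), eta y (mact f m) = mact f (eta x m)).

Variable P : contra E.

Definition thetaS (x : Obj) : pred (cv P) := fun p =>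
  if excluded_middle_informative (exists q, p = cdot (@cpi _ _ P) (ee x) q)
  then true else false.

Lemma cdot_linear (phi : LinFam E k^o) : linear (cdot (@cpi _ _ P) phi).
Proof.
move=> a p q; rewrite /cdot.
have [Hlin _] := cax P.
set F := exist _ _ (cdot_lin phi p); set G := exist _ _ (cdot_lin phi q).
have H : linfam (fun x y c => a *: sval F x y c + sval G x y c).
  move=> x y r c d /=. rewrite (proj2_sig phi x y).
  set u := sval phi x y c; set v := sval phi x y d.
  have -> : r *: u + v = r * (u : k) + (v : k) by [].
  rewrite !scalerDl !scalerDr !scalerA mulrA (mulrC a r) addrACA //.
rewrite -(Hlin a F G H); congr cpi; apply: eq_exist_uncurried.
have e : (fun (a0 b : Obj) (c : @C _ E a0 b) => (sval phi a0 b c : k) *: (a *: p + q)) =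
         (fun x y c => a *: sval F x y c + sval G x y c).
  do 3 (apply: functional_extensionality_dep => ?).
  by rewrite /= scalerDr !scalerA mulrC.
exists e; exact: proof_irrelevance.
Qed.

Lemma thetaSP x p :
  reflect (exists q, p = cdot (@cpi _ _ P) (ee x) q) (p \in thetaS x).
Proof.
rewrite unfold_in /thetaS; case: excluded_middle_informative => h.
  by left. by right.
Qed.

Lemma thetaS_closed x : subsemimod_closed (thetaS x).
Proof.
have L := cdot_linear (ee x).
have Z : cdot (@cpi _ _ P) (ee x) 0 = 0.
  have := L (-1) 0 0; rewrite scaler0 addr0 scaleN1r addNr //.
split; [split|].
- by apply/thetaSP; exists 0; rewrite Z.
- move=> u v /thetaSP [qu ->] /thetaSP [qv ->]; apply/thetaSP; exists (qu + qv).
  by have := L 1 qu qv; rewrite !scale1r.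
- move=> a u /thetaSP [qu ->]; apply/thetaSP; exists (a *: qu).
  by have := L a qu 0; rewrite Z !addr0.
Qed.

HB.instance Definition _ x :=
  GRing.isSubmodClosed.Build k (cv P) (thetaS x) (thetaS_closed x).

Definition ThetaT (x : Obj) := {p : cv P | thetaS x p}.
HB.instance Definition _ x := [isSub of ThetaT x for @sval _ _].
HB.instance Definition _ x := [Choice of ThetaT x by <:].
HB.instance Definition _ x := [SubChoice_isSubLmodule of ThetaT x by <:].

Definition ThetaMod : kmod :=
  @KMod ThetaT (fun x y (f : Hom x y) (p : ThetaT x) =>
                  insubd (0 : ThetaT y) (cdot (@cpi _ _ P) (evf f) (val p))).
End Theta.

Section Equiv.
Variables (k : fieldType) (E : kcat k).

Definition Theta_mor (P Q : contra E) (g : cv P -> cv Q) :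
    forall x, ThetaT P x -> ThetaT Q x :=
  fun x p => insubd (0 : ThetaT Q x) (g (val p)).

Definition Theta_is_functor :=
  (forall P : contra E, is_kmod (ThetaMod P)) /\
  (forall (P Q : contra E) (g : cv P -> cv Q), is_cmorph g ->
      @is_kmorph _ _ (ThetaMod P) (ThetaMod Q) (Theta_mor g)) /\
  (forall (P : contra E) x (p : ThetaT P x), Theta_mor (@id (cv P)) p = p) /\
  (forall (P Q R : contra E) (g : cv P -> cv Q) (h : cv Q -> cv R),
      is_cmorph g -> is_cmorph h ->
      forall x (p : ThetaT P x), Theta_mor (h \o g) p = Theta_mor h (Theta_mor g p)).

Definition Theta_faithful :=
  forall (P Q : contra E) (g1 g2 : cv P -> cv Q), is_cmorph g1 -> is_cmorph g2 ->
    (forall x (p : ThetaT P x), Theta_mor g1 p = Theta_mor g2 p) ->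
    forall p, g1 p = g2 p.

Definition Theta_full :=
  forall (P Q : contra E) (eta : forall x, ThetaT P x -> ThetaT Q x),
    @is_kmorph _ _ (ThetaMod P) (ThetaMod Q) eta ->
    exists g : cv P -> cv Q, is_cmorph g /\ forall x (p : ThetaT P x), Theta_mor g p = eta x p.

Definition Theta_ess_surj :=
  forall M : kmod E, is_kmod M ->
    exists (P : contra E) (eta : forall x, ThetaT P x -> Mv M x)
           (zeta : forall x, Mv M x -> ThetaT P x),
      @is_kmorph _ _ (ThetaMod P) M eta /\ @is_kmorph _ _ M (ThetaMod P) zeta /\
      (forall x p, zeta x (eta x p) = p) /\ (forall x m, eta x (zeta x m) = m).

Definition Theta_equivalence :=
  Theta_is_functor /\ Theta_faithful /\ Theta_full /\ Theta_ess_surj.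
End Equiv.

(* A C_E-contramodule P is the "completed direct sum" of its pieces e_x.P:
   the counit and coassociativity give p = pi(c |-> c(1_x) e_x.p), and
   e_w.pi(F) = sum_(a <= w) sum_i b_i.F(a,w)(b'_i), where (b_i) is a basis of
   Hom(a, w) and (b'_i) its dual basis; the sum is finite because E is lower
   finite.  So a contramodule morphism is determined by its restrictions to
   the e_x.P = Theta(P)(x) (faithfulness), and the components of any E-module
   map glue along this decomposition to a contramodule morphism (fullness).
   An E-module M arises from the contramodule prod_x M(x), whose contraaction
   is the finite sum above computed with the action of E (essential
   surjectivity). *)

From HB Require Import structures.
From mathcomp Require Import all_boot all_order all_algebra.
From mathcomp Require Import boolp.
From Pilot Require Import Defs.
From Stdlib Require Import ClassicalEpsilon.
Set Implicit Arguments. Unset Strict Implicit. Unset Printing Implicit Defensive.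
Import GRing.Theory.
Local Open Scope ring_scope.

Section LinearFun.
Variables (R : pzRingType) (U V : lmodType R) (f : U -> V).
Hypothesis f_lin : linear f.
Let F : {linear U -> V} := HB.pack f (GRing.isLinear.Build R U V *:%R f f_lin).

Lemma linear_fun0 : f 0 = 0. Proof. exact: (linear0 F). Qed.
Lemma linear_funZ a u : f (a *: u) = a *: f u. Proof. exact: (linearZZ F). Qed.
Lemma linear_fun_sum (I : Type) (r : seq I) (G : I -> U) :
  f (\sum_(i <- r) G i) = \sum_(i <- r) f (G i).
Proof. exact: (linear_sum F). Qed.
End LinearFun.

Section UniqSums.
Variable V : nmodType.

Lemma big_uniq_single (I : eqType) (r : seq I) j (F : I -> V) :
  uniq r -> j \in r -> (forall i, i != j -> F i = 0) -> \sum_(i <- r) F i = F j.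
Proof. by move=> ur jr F0; rewrite (bigD1_seq j) //= big1 ?addr0. Qed.

Lemma big_uniq_filter (I : eqType) (r s : seq I) (P : pred I) (F : I -> V) :
  uniq r -> uniq s -> (forall i, (i \in r) = (i \in s) && P i) ->
  \sum_(i <- r) F i = \sum_(i <- s | P i) F i.
Proof.
move=> ur us rsP; rewrite -[RHS]big_filter; apply/perm_big/uniq_perm;
  by rewrite ?filter_uniq // => i; rewrite mem_filter andbC.
Qed.

Lemma exchange_big_uniq (I J : eqType) (r : seq I) (s : seq J) (A : I -> seq J) (B : J -> seq I)
    (R : I -> J -> bool) (G : I -> J -> V) :
  uniq r -> uniq s -> (forall i, uniq (A i)) -> (forall j, uniq (B j)) ->
  (forall i j, i \in r -> (j \in A i) = (j \in s) && R i j) ->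
  (forall i j, j \in s -> (i \in B j) = (i \in r) && R i j) ->
  \sum_(i <- r) \sum_(j <- A i) G i j = \sum_(j <- s) \sum_(i <- B j) G i j.
Proof.
move=> ur us uA uB memA memB.
rewrite big_seq (eq_bigr (fun i => \sum_(j <- s | R i j) G i j)); last first.
  by move=> i ir; apply: big_uniq_filter => // j; apply: memA.
rewrite -big_seq (exchange_big_dep predT) //=; apply: eq_big_seq => j js.
by rewrite (big_uniq_filter _ (P := R^~ j) (uB j) ur) // => i; apply: memB.
Qed.
End UniqSums.

Lemma In_mem (T : eqType) (x : T) (s : seq T) : List.In x s <-> x \in s.
Proof.
elim: s => [|y s IH] //=; rewrite in_cons.
by split=> [[->|/IH->]|/orP[/eqP->|/IH]]; rewrite ?eqxx ?orbT; auto.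
Qed.

Lemma NoDup_uniq (T : eqType) (s : seq T) : List.NoDup s <-> uniq s.
Proof.
elim: s => [|x s IH] /=; first by split=> // _; constructor.
rewrite List.NoDup_cons_iff IH In_mem.
by split=> [[/negP-> ->]|/andP[/negP]].
Qed.

(* Equality of objects is decided classically, so that the finite sets of
   objects given by lower finiteness can be handled as duplicate-free [seq]s. *)
HB.instance Definition _ (k : fieldType) (E : kcat k) := gen_eqMixin (Obj E).

Section Preorder.
Variables (k : fieldType) (E : kcat k).
Local Notation Obj := (Obj E).
Local Notation Hom := (@Defs.Hom _ E).

Lemma hom_prec x y (f : Hom x y) : f != 0 -> prec x y.
Proof. by move=> nf; apply: prec_one; exists f. Qed.

Lemma prec_refl (x : Obj) : prec x x.
Proof. exact/hom_prec/idm_neq0. Qed.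

Lemma prec_trans (x y z : Obj) : prec x y -> prec y z -> prec x z.
Proof.
move=> Hxy Hyz; elim: Hyz Hxy => [a b ab|a b c _ IH bc] xa; first exact: prec_step xa ab.
exact: prec_step (IH xa) bc.
Qed.

Hypothesis LF : lower_finite E.

Definition below (y : Obj) : seq Obj :=
  undup [seq x <- sval (cid (LF.2 y)) | `[< prec x y >]].

Lemma below_uniq (y : Obj) : uniq (below y).
Proof. exact: undup_uniq. Qed.

Lemma mem_below (x y : Obj) : x \in below y <-> prec x y.
Proof.
rewrite mem_undup mem_filter; split=> [/andP[/asboolP]//|xy].
by rewrite asboolT //=; apply/In_mem/(svalP (cid (LF.2 y))).
Qed.

Lemma interval_spec (x y : Obj) : List.NoDup (interval x y) /\
  forall z, List.In z (interval x y) <-> prec x z /\ prec z y.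
Proof.
rewrite /interval; case: excluded_middle_informative => [H|[]].
  exact: svalP (constructive_indefinite_description _ H).
have [s Hs] := LF.1 x y.
exists (undup [seq z <- s | `[< prec x z /\ prec z y >]]).
split=> [|z]; first exact/NoDup_uniq/undup_uniq.
rewrite In_mem mem_undup mem_filter; split=> [/andP[/asboolP]//|[xz zy]].
by rewrite asboolT //=; apply/In_mem/Hs.
Qed.

Lemma interval_uniq (x y : Obj) : uniq (interval x y).
Proof. exact/NoDup_uniq/(interval_spec x y).1. Qed.

Lemma mem_interval (x y z : Obj) : z \in interval x y <-> prec x z /\ prec z y.
Proof. by rewrite -In_mem; apply: (interval_spec x y).2. Qed.

Lemma exchange_big_below (V : nmodType) (y : Obj) (G : Obj -> Obj -> V) :
  \sum_(z <- below y) \sum_(w <- below z) G z w =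
  \sum_(w <- below y) \sum_(z <- interval w y) G z w.
Proof.
apply: (exchange_big_uniq (R := fun z w => w \in below z)); try exact: below_uniq.
- by move=> w; apply: interval_uniq.
- move=> z w /mem_below zy; apply/idP/andP=> [wz|[]//]; split=> //.
  by apply/mem_below; apply: prec_trans zy; apply/mem_below.
- move=> z w /mem_below wy.
  apply/idP/andP=> [/mem_interval[wz zy]|[/mem_below zy /mem_below wz]].
    by split; apply/mem_below.
  exact/mem_interval.
Qed.
End Preorder.

Section Bases.
Variable k : fieldType.

Lemma coord_expand (V : vectType k) (v : V) : v = \sum_i (dualb i v : k) *: bvec i.
Proof. by rewrite {1}(coord_vbasis (memvf v)); apply: eq_bigr => i _; rewrite lfunE. Qed.

Lemma dual_expand (V : vectType k) (phi : 'Hom(V, k^o)) :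
  phi = \sum_i (phi (bvec i) : k) *: dualb i.
Proof.
apply/lfunP => v; rewrite sum_lfunE {1}(coord_expand v) linear_sum.
by apply: eq_bigr => i _; rewrite linearZ scale_lfunE /= [RHS]mulrC.
Qed.
End Bases.

Section Morphisms.
Variables (k : fieldType) (E : kcat k).
Local Notation Obj := (Obj E).
Local Notation Hom := (@Defs.Hom _ E).
Local Notation C := (@Defs.C _ E).

Lemma comp0l (x y z : Obj) (g : Hom x y) : comp (0 : Hom y z) g = 0.
Proof. exact: linear_fun0 (@comp_linl _ E x y z g). Qed.

Lemma comp0r (x y z : Obj) (h : Hom y z) : comp h (0 : Hom x y) = 0.
Proof. exact: linear_fun0 (@comp_linr _ E x y z h). Qed.

Lemma compZl (x y z : Obj) (g : Hom x y) a (h : Hom y z) : comp (a *: h) g = a *: comp h g.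
Proof. exact: (linear_funZ (@comp_linl _ E x y z g) a h). Qed.

Lemma comp_suml (x y z : Obj) (g : Hom x y) (I : Type) (r : seq I) (F : I -> Hom y z) :
  comp (\sum_(i <- r) F i) g = \sum_(i <- r) comp (F i) g.
Proof. exact: (linear_fun_sum (@comp_linl _ E x y z g) r F). Qed.

Lemma deltaE (x y : Obj) (f : Hom x y) : delta f x y = f.
Proof.
rewrite /delta; case: excluded_middle_informative => [ex|[]] //.
case: excluded_middle_informative => [ey|[]] //.
by rewrite (Prop_irrelevance ex erefl) (Prop_irrelevance ey erefl).
Qed.

Lemma delta0l (x y : Obj) (f : Hom x y) a b : x <> a -> delta f a b = 0.
Proof. by rewrite /delta; case: excluded_middle_informative. Qed.

Lemma delta0r (x y : Obj) (f : Hom x y) a b : y <> b -> delta f a b = 0.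
Proof.
by rewrite /delta; case: excluded_middle_informative => // ?; case: excluded_middle_informative.
Qed.

Lemma delta_lin (x y a b : Obj) : linear (fun f : Hom x y => delta f a b).
Proof.
move=> r f g /=.
have [<-|xa] := pselect (x = a); last by rewrite !(delta0l _ _ xa) scaler0 addr0.
have [<-|yb] := pselect (y = b); last by rewrite !(delta0r _ _ yb) scaler0 addr0.
by rewrite !deltaE.
Qed.

Lemma delta0 (x y a b : Obj) : delta (0 : Hom x y) a b = 0.
Proof. exact: linear_fun0 (@delta_lin x y a b). Qed.

Lemma C_eq0 (a b : Obj) (phi : C a b) : ~ prec a b -> phi = 0.
Proof.
move=> ab; apply/lfunP => v; rewrite zero_lfunE.
have [->|/hom_prec//] := eqVneq v 0; exact: linear0.
Qed.

Definition postcomp (a z b : Obj) (h : Hom z b) : {linear Hom a z -> Hom a b} :=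
  HB.pack (fun g : Hom a z => comp h g)
    (GRing.isLinear.Build k (Hom a z) (Hom a b) *:%R _ (@comp_linr _ E a z b h)).

Definition precomp (a z b : Obj) (phi : C a b) (h : Hom z b) : C a z :=
  (phi \o linfun (postcomp a h))%VF.

Lemma precompE (a z b : Obj) (phi : C a b) (h : Hom z b) (g : Hom a z) :
  precomp phi h g = phi (comp h g).
Proof. by rewrite comp_lfunE lfunE. Qed.

Lemma precomp_idm (a b : Obj) (phi : C a b) : precomp phi (idm b) = phi.
Proof. by apply/lfunP => g; rewrite precompE comp1m. Qed.

Lemma precomp0 (a z b : Obj) (phi : C a b) : precomp phi (0 : Hom z b) = 0.
Proof. by apply/lfunP => g; rewrite precompE comp0l linear0 zero_lfunE. Qed.

Lemma precomp0l (a z b : Obj) (h : Hom z b) : precomp (0 : C a b) h = 0.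
Proof. by apply/lfunP => g; rewrite precompE !zero_lfunE. Qed.

Definition conv (u v : forall x y : Obj, Hom x y) (a b : Obj) : Hom a b :=
  \sum_(z <- interval a b) comp (u z b) (v a z).

Hypothesis LF : lower_finite E.

Lemma conv_delta (x z y : Obj) (g : Hom x z) (h : Hom z y) a b :
  conv (delta h) (delta g) a b = delta (comp h g) a b.
Proof.
rewrite /conv.
have [<-|xa] := pselect (x = a); last first.
  by rewrite (delta0l _ _ xa) big1 // => w _; rewrite (delta0l _ _ xa) comp0r.
have [<-|yb] := pselect (y = b); last first.
  by rewrite (delta0r _ _ yb) big1 // => w _; rewrite (delta0r _ _ yb) comp0l.
rewrite deltaE.
have [->|/hom_prec xz] := eqVneq g 0.
  by rewrite comp0r big1 // => w _; rewrite delta0 comp0r.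
have [->|/hom_prec zy] := eqVneq h 0.
  by rewrite comp0l big1 // => w _; rewrite delta0 comp0l.
rewrite (big_uniq_single (j := z)) ?deltaE ?(interval_uniq LF) //.
  exact/(mem_interval LF).
by move=> w /eqP wz; rewrite (delta0r _ _ (nesym wz)) comp0r.
Qed.

Lemma sum_idm_delta (a b : Obj) :
  \sum_(z <- interval a b) comp (delta (idm z) z b) (delta (idm z) a z) = delta (idm a) a b.
Proof.
have [<-|ab] := pselect (a = b); last first.
  rewrite (delta0r _ _ ab) big1 // => z _.
  have [->|zb] := pselect (z = b); last by rewrite (delta0r _ _ zb) comp0l.
  by rewrite (delta0l _ _ (nesym ab)) comp0r.
rewrite (big_uniq_single (j := a)) ?deltaE ?comp1m ?(interval_uniq LF) //.
  by apply/(mem_interval LF); split; apply: prec_refl.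
by move=> z /eqP za; rewrite (delta0l _ _ za) comp0r.
Qed.
End Morphisms.

Section Families.
Variables (k : fieldType) (E : kcat k) (V : lmodType k).
Local Notation Obj := (Obj E).
Local Notation Hom := (@Defs.Hom _ E).
Local Notation C := (@Defs.C _ E).
Local Notation Fam := (forall x y : Obj, C x y -> V).

Lemma linfam0 : linfam (fun x y (c : C x y) => 0 : V).
Proof. by move=> x y r c d; rewrite scaler0 addr0. Qed.

Lemma linfamD (f g : Fam) a : linfam f -> linfam g ->
  linfam (fun x y c => a *: f x y c + g x y c).
Proof.
move=> Hf Hg x y r c d /=; rewrite (Hf x y) (Hg x y).
by rewrite !scalerDr !scalerA (mulrC r a) addrACA.
Qed.

Lemma linfam_sum (I : Type) (r : seq I) (F : I -> Fam) : (forall i, linfam (F i)) ->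
  linfam (fun x y c => \sum_(i <- r) F i x y c).
Proof.
move=> HF x y a c d; rewrite scaler_sumr -big_split.
by apply: eq_bigr => i _; rewrite (HF i x y).
Qed.

Lemma linfam_scale (phi : forall x y, C x y -> k^o) (q : Obj -> Obj -> V) :
  (forall x y, linear (phi x y)) -> linfam (fun x y c => (phi x y c : k) *: q x y).
Proof. by move=> Hphi x y r c d; rewrite (Hphi x y) scalerDl scalerA. Qed.

Lemma linfam_ev (u : forall x y, Hom x y) (q : Obj -> Obj -> V) :
  linfam (fun x y (c : C x y) => (c (u x y) : k) *: q x y).
Proof. by apply: linfam_scale => x y r c d; rewrite add_lfunE scale_lfunE. Qed.

Lemma fmu_lin (F : forall x y, C x y -> forall a b, C a b -> V) : linfam (fmu F).
Proof.
move=> x y r c d; rewrite /fmu scaler_sumr -big_split; apply: eq_bigr => z _.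
rewrite scaler_sumr -big_split; apply: eq_bigr => i _.
rewrite scaler_sumr -big_split; apply: eq_bigr => j _.
by rewrite add_lfunE scale_lfunE scalerDl scalerA.
Qed.
End Families.

(** * Calculus of the contraaction *)

Section Contraaction.
Variables (k : fieldType) (E : kcat k) (P : contra E).
Local Notation Obj := (Obj E).
Local Notation Hom := (@Defs.Hom _ E).
Local Notation C := (@Defs.C _ E).
Local Notation V := (cv P).
Local Notation Fam := (forall x y : Obj, C x y -> V).

(* The contraaction [cpi], extended by [0] to families that are not linear. *)
Definition contract (f : Fam) : V :=
  if excluded_middle_informative (linfam f) is left Hf then cpi (exist _ f Hf) else 0.

Lemma contractE (f : Fam) (Hf : linfam f) : contract f = cpi (exist _ f Hf).
Proof.
rewrite /contract; case: excluded_middle_informative => [Hf'|[]] //.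
by rewrite (Prop_irrelevance Hf Hf').
Qed.

Lemma cpiE (F : LinFam E V) : cpi F = contract (sval F).
Proof. by case: F => f Hf; rewrite (contractE Hf). Qed.

Lemma eq_contract (f g : Fam) : (forall x y c, f x y c = g x y c) -> contract f = contract g.
Proof. by move=> fg; congr contract; do 3 apply: functional_extensionality_dep => ?. Qed.

Lemma contract_lin (f g : Fam) a : linfam f -> linfam g ->
  contract (fun x y c => a *: f x y c + g x y c) = a *: contract f + contract g.
Proof.
move=> Hf Hg; rewrite (contractE (linfamD a Hf Hg)) (contractE Hf) (contractE Hg).
exact: ((cax P).1 a (exist _ f Hf) (exist _ g Hg)).
Qed.

Lemma contract0 : contract (fun x y c => 0) = 0.
Proof.
rewrite -[RHS](addNr (contract (fun x y c => 0))) -scaleN1r -contract_lin;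
  try exact: linfam0.
by apply: eq_contract => *; rewrite scaler0 addr0.
Qed.

Lemma contractD (f g : Fam) : linfam f -> linfam g ->
  contract (fun x y c => f x y c + g x y c) = contract f + contract g.
Proof.
move=> Hf Hg; rewrite -[contract f]scale1r -contract_lin //.
by apply: eq_contract => *; rewrite scale1r.
Qed.

Lemma contractZ (f : Fam) a : linfam f -> contract (fun x y c => a *: f x y c) = a *: contract f.
Proof.
move=> Hf; rewrite -[RHS]addr0 -contract0 -contract_lin //; last exact: linfam0.
by apply: eq_contract => *; rewrite addr0.
Qed.

Lemma contract_sum (I : Type) (r : seq I) (F : I -> Fam) : (forall i, linfam (F i)) ->
  contract (fun x y c => \sum_(i <- r) F i x y c) = \sum_(i <- r) contract (F i).
Proof.
move=> HF; elim: r => [|i r IH].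
  by rewrite big_nil -[RHS]contract0; apply: eq_contract => *; rewrite big_nil.
rewrite big_cons -IH -contractD //; last exact: linfam_sum.
by apply: eq_contract => *; rewrite big_cons.
Qed.

Lemma contract_assoc (F : forall x y, C x y -> forall a b, C a b -> V)
    (HF1 : forall x y c, linfam (F x y c))
    (HF2 : forall x y a b (c' : C a b), linear (fun c : C x y => F x y c a b c')) :
  contract (fun x y c => contract (F x y c)) = contract (fmu F).
Proof.
have Hcpi : linfam (fun x y c => cpi (exist _ _ (HF1 x y c))).
  move=> x y r c d; rewrite -!contractE -contract_lin //.
  by apply: eq_contract => a b c'; rewrite (HF2 x y a b c').
rewrite (eq_contract (g := fun x y c => cpi (exist _ _ (HF1 x y c)))); last first.
  by move=> x y c; rewrite (contractE (HF1 x y c)).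
by rewrite (contractE Hcpi) ((cax P).2.2 F HF1 HF2 Hcpi (fmu_lin F)) -contractE.
Qed.

(* Associativity, with the comultiplication of [C] made explicit by the dual-basis expansion. *)
Lemma contract_conv (u : forall x y, Hom x y) (G : forall x y a b, C a b -> V) :
  (forall x y, linfam (G x y)) ->
  contract (fun x y c => (c (u x y) : k) *: contract (G x y)) =
  contract (fun a b phi => \sum_(z <- interval a b) G z b a z (precomp phi (u z b))).
Proof.
move=> HG; pose F x y (c : C x y) a b (c' : C a b) := (c (u x y) : k) *: G x y a b c'.
have HF1 x y c : linfam (F x y c).
  by move=> a b r d e; rewrite /F (HG x y) scalerDr !scalerA mulrC.
have HF2 x y a b (c' : C a b) : linear (fun c : C x y => F x y c a b c').
  by move=> r c d; rewrite /F add_lfunE scale_lfunE scalerDl scalerA.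
rewrite (eq_contract (g := fun x y c => contract (F x y c))); last first.
  by move=> x y c; rewrite contractZ.
rewrite contract_assoc //; apply: eq_contract => a b phi; apply: eq_bigr => z _.
rewrite {1}(dual_expand (precomp phi (u z b))) (linear_fun_sum (HG z b a z)).
apply: eq_bigr => i _; rewrite (linear_funZ (HG z b a z)) precompE /F.
rewrite {2}(coord_expand (u z b)) comp_suml linear_sum scaler_suml; apply: eq_bigr => j _.
by rewrite compZl scalerA linearZ /= mulrC.
Qed.

(* With [u = delta f] this is the paper's [ev_f . p]; with [u = delta (idm x)]
   it is [e_x . p]. *)
Definition ev_act (u : forall x y, Hom x y) (p : V) : V :=
  contract (fun a b (c : C a b) => (c (u a b) : k) *: p).

Lemma eq_ev_act (u1 u2 : forall x y, Hom x y) p :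
  (forall a b, u1 a b = u2 a b) -> ev_act u1 p = ev_act u2 p.
Proof. by move=> u12; apply: eq_contract => a b c; rewrite u12. Qed.

Lemma ev_act_lin u : linear (ev_act u).
Proof.
move=> r p q; rewrite /ev_act -contract_lin; try exact: linfam_ev.
by apply: eq_contract => a b c; rewrite scalerDr !scalerA mulrC.
Qed.

Lemma ev_actDl (u1 u2 : forall x y, Hom x y) r p :
  ev_act (fun a b => r *: u1 a b + u2 a b) p = r *: ev_act u1 p + ev_act u2 p.
Proof.
rewrite /ev_act -contract_lin; try exact: linfam_ev.
by apply: eq_contract => a b c; rewrite linearD linearZ /= scalerDl scalerA.
Qed.

Lemma ev_act0 p : ev_act (fun a b => 0) p = 0.
Proof. by rewrite -contract0; apply: eq_contract => a b c; rewrite linear0 scale0r. Qed.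

Lemma ev_act_counit p : ev_act (fun a b => delta (idm a) a b) p = p.
Proof. by have := (cax P).2.1 p; rewrite /cdot cpiE. Qed.

Lemma contract_ev_act (u : forall x y, Hom x y) (v : forall x y a b, Hom a b) p :
  contract (fun x y c => (c (u x y) : k) *: ev_act (v x y) p) =
  ev_act (fun a b => \sum_(z <- interval a b) comp (u z b) (v z b a z)) p.
Proof.
rewrite contract_conv; last by move=> x y; apply: linfam_ev.
apply: eq_contract => a b phi; rewrite linear_sum scaler_suml.
by apply: eq_bigr => z _; rewrite precompE.
Qed.

Lemma ev_actM (u v : forall x y, Hom x y) p : ev_act u (ev_act v p) = ev_act (conv u v) p.
Proof. exact: (contract_ev_act u (fun _ _ => v)). Qed.

Lemma ev_act_delta_orth (x z z' y : Obj) (g : Hom x z) (h : Hom z' y) p :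
  z <> z' -> ev_act (delta h) (ev_act (delta g) p) = 0.
Proof.
move=> zz'; rewrite ev_actM -(ev_act0 p); apply: eq_ev_act => a b.
rewrite /conv big1 // => w _.
have [<-|zw] := pselect (z = w); last by rewrite (delta0r _ _ zw) comp0r.
by rewrite (delta0l _ _ (nesym zz')) comp0l.
Qed.

Hypothesis LF : lower_finite E.

Lemma ev_act_delta_comp (x z y : Obj) (g : Hom x z) (h : Hom z y) p :
  ev_act (delta h) (ev_act (delta g) p) = ev_act (delta (comp h g)) p.
Proof. by rewrite ev_actM; apply: eq_ev_act => a b; rewrite (conv_delta LF). Qed.

Lemma contract_idempotents p :
  contract (fun x y c => (c (delta (idm x) x y) : k) *: ev_act (delta (idm x)) p) = p.
Proof.
rewrite (contract_ev_act (fun x y => delta (idm x) x y) (fun x y => delta (idm x))).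
by rewrite -[RHS]ev_act_counit; apply: eq_ev_act => a b; rewrite (sum_idm_delta LF).
Qed.

Lemma ev_act_idm_contract (F : Fam) (w : Obj) : linfam F ->
  ev_act (delta (idm w)) (contract F) =
  \sum_(a <- below LF w) \sum_(i < \dim (fullv : {vspace Hom a w}))
     ev_act (delta (bvec i : Hom a w)) (F a w (dualb i)).
Proof.
move=> HF; have F0 a b : F a b 0 = 0 := linear_fun0 (HF a b).
have -> : \sum_(a <- below LF w) \sum_(i < \dim (fullv : {vspace Hom a w}))
      ev_act (delta (bvec i : Hom a w)) (F a w (dualb i)) =
    contract (fun a' b phi => \sum_(a <- below LF w) \sum_(i < \dim (fullv : {vspace Hom a w}))
      (phi (delta (bvec i) a' b) : k) *: F a w (dualb i)).
  rewrite contract_sum => [|a]; last by apply: linfam_sum => i; apply: linfam_ev.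
  by apply: eq_bigr => a _; rewrite contract_sum // => i; apply: linfam_ev.
rewrite /ev_act (contract_conv _ (G := fun _ _ => F)) //.
apply: eq_contract => a b phi.
have [wb|wb] := pselect (w = b); last first.
  rewrite big1 => [|z _]; last by rewrite (delta0r _ _ wb) precomp0 F0.
  by rewrite big1 // => c _; rewrite big1 // => i _; rewrite (delta0r _ _ wb) linear0 scale0r.
subst b; have [aw|naw] := pselect (prec a w); last first.
  rewrite (C_eq0 phi naw) big1 => [|z _]; last by rewrite precomp0l F0.
  by rewrite big1 // => c _; rewrite big1 // => i _; rewrite zero_lfunE scale0r.
rewrite (big_uniq_single (j := w)) ?(interval_uniq LF) //; first last.
- by move=> z /eqP zw; rewrite (delta0l _ _ (nesym zw)) precomp0 F0.
- by apply/(mem_interval LF); split=> //; apply: prec_refl.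
rewrite (big_uniq_single (j := a)) ?(below_uniq LF) //; first last.
- by move=> c /eqP ca; rewrite big1 // => i _; rewrite (delta0l _ _ ca) linear0 scale0r.
- exact/(mem_below LF).
rewrite deltaE precomp_idm {1}(dual_expand phi) (linear_fun_sum (HF a w)).
by apply: eq_bigr => i _; rewrite (linear_funZ (HF a w)) deltaE.
Qed.

Lemma ev_act_idm_diag (q : Obj -> Obj -> V) (a : Obj) :
  ev_act (delta (idm a)) (contract (fun x y c => (c (delta (idm x) x y) : k) *: q x y)) =
  ev_act (delta (idm a)) (q a a).
Proof.
rewrite {1}/ev_act contract_conv; last by move=> *; apply: linfam_ev.
apply: eq_contract => a' b phi.
have [ab|nab] := pselect (prec a' b); last first.
  by rewrite (C_eq0 phi nab) zero_lfunE scale0r big1 // => z _; rewrite precomp0l zero_lfunE scale0r.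
rewrite (big_uniq_single (j := a')) ?(interval_uniq LF) //; first last.
- by move=> z /eqP za; rewrite (delta0r _ _ (nesym za)) linear0 scale0r.
- by apply/(mem_interval LF); split=> //; apply: prec_refl.
rewrite deltaE precompE compm1.
have [aa'|aa'] := pselect (a = a'); first by subst a'.
by rewrite (delta0l _ _ aa') linear0 !scale0r.
Qed.
End Contraaction.

(** * The functor Theta: faithful and full *)

Section ThetaObjects.
Variables (k : fieldType) (E : kcat k).
Local Notation Obj := (Obj E).
Local Notation Hom := (@Defs.Hom _ E).
Local Notation C := (@Defs.C _ E).
Hypothesis LF : lower_finite E.
Variable P : contra E.
Local Notation thetaS := (@thetaS _ _ P).

Lemma cdot_evfam (u : forall x y, Hom x y) (q : cv P) : cdot (@cpi _ _ P) (evfam u) q = ev_act u q.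
Proof. by rewrite /cdot cpiE. Qed.

Lemma mem_thetaS x (p : cv P) : p \in thetaS x <-> ev_act (delta (idm x)) p = p.
Proof.
split=> [/thetaSP[q ->]|px]; first by rewrite cdot_evfam (ev_act_delta_comp LF) comp1m.
by apply/thetaSP; exists p; rewrite cdot_evfam px.
Qed.

Lemma ev_act_delta_thetaS x y (f : Hom x y) (q : cv P) : ev_act (delta f) q \in thetaS y.
Proof. by apply/mem_thetaS; rewrite (ev_act_delta_comp LF) comp1m. Qed.

Lemma ev_act_idm_ThetaT x (m : ThetaT P x) : ev_act (delta (idm x)) (val m) = val m.
Proof. exact/mem_thetaS/valP. Qed.

Lemma val_mact x y (f : Hom x y) (m : ThetaT P x) :
  val (@mact _ _ (ThetaMod P) x y f m) = ev_act (delta f) (val m).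
Proof. by rewrite /= cdot_evfam insubdK //; apply: ev_act_delta_thetaS. Qed.

Lemma ThetaMod_kmod : is_kmod (ThetaMod P).
Proof.
split; [|split; [|split]].
- move=> x y m r f g; apply: val_inj; rewrite val_mact linearP /= !val_mact -ev_actDl.
  by apply: eq_ev_act => a b; rewrite (@delta_lin _ E x y a b).
- by move=> x y f r m n; apply: val_inj; rewrite val_mact !linearP /= !val_mact ev_act_lin.
- by move=> x m; apply: val_inj; rewrite val_mact ev_act_idm_ThetaT.
- by move=> x y z g h m; apply: val_inj; rewrite !val_mact (ev_act_delta_comp LF).
Qed.
Lemma val_ThetaT_sum x (I : Type) (r : seq I) (F : I -> ThetaT P x) :
  val (\sum_(i <- r) F i) = \sum_(i <- r) val (F i).
Proof. exact: linear_sum. Qed.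

Definition theta_proj x (p : cv P) : ThetaT P x := insubd 0 (ev_act (delta (idm x)) p).

Lemma val_theta_proj x p : val (theta_proj x p) = ev_act (delta (idm x)) p.
Proof. by rewrite insubdK //; apply: ev_act_delta_thetaS. Qed.

Lemma theta_proj_lin x : linear (theta_proj x).
Proof. by move=> r p q; apply: val_inj; rewrite linearP /= !val_theta_proj ev_act_lin. Qed.

Lemma theta_proj_val x (m : ThetaT P x) : theta_proj x (val m) = m.
Proof. by apply: val_inj; rewrite val_theta_proj (ev_act_idm_ThetaT). Qed.

Lemma theta_proj_orth x y (m : ThetaT P x) : x <> y -> theta_proj y (val m) = 0.
Proof.
move=> xy; apply: val_inj; rewrite val_theta_proj -(ev_act_idm_ThetaT m).
by rewrite ev_act_delta_orth.
Qed.

Lemma theta_proj_contract x (f : forall a b : Obj, C a b -> cv P) : linfam f ->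
  theta_proj x (contract f) =
  \sum_(a <- below LF x) \sum_(i < \dim (fullv : {vspace Hom a x}))
    @mact _ _ (ThetaMod P) a x (bvec i) (theta_proj a (f a x (dualb i))).
Proof.
move=> Hf; apply: val_inj; rewrite val_theta_proj (ev_act_idm_contract LF _ Hf) val_ThetaT_sum.
apply: eq_bigr => a _; rewrite val_ThetaT_sum; apply: eq_bigr => i _.
by rewrite val_mact val_theta_proj (ev_act_delta_comp LF) compm1.
Qed.
End ThetaObjects.

Section ThetaMorphisms.
Variables (k : fieldType) (E : kcat k).
Local Notation Obj := (Obj E).
Local Notation C := (@Defs.C _ E).
Hypothesis LF : lower_finite E.

Section ContraMorphism.
Variables (P Q : contra E) (g : cv P -> cv Q).
Hypothesis g_cmorph : is_cmorph g.

Lemma cmorph_contract (f : forall x y : Obj, C x y -> cv P) : linfam f ->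
  g (contract f) = contract (fun x y c => g (f x y c)).
Proof.
move=> Hf; have Hgf : linfam (fun x y c => g (f x y c)).
  by move=> x y r c d; rewrite (Hf x y) g_cmorph.1.
by rewrite (contractE Hf) (g_cmorph.2 (exist _ f Hf) Hgf) -contractE.
Qed.

Lemma cmorph_ev_act u p : g (ev_act u p) = ev_act u (g p).
Proof.
rewrite cmorph_contract; last exact: linfam_ev.
by apply: eq_contract => a b c; rewrite (linear_funZ g_cmorph.1).
Qed.

Lemma cmorph_thetaS x p : p \in @thetaS _ _ P x -> g p \in @thetaS _ _ Q x.
Proof. by move/(mem_thetaS LF) => px; apply/(mem_thetaS LF); rewrite -cmorph_ev_act px. Qed.

Lemma val_Theta_mor x (p : ThetaT P x) : val (Theta_mor g p) = g (val p).
Proof. by rewrite insubdK //; apply/cmorph_thetaS/valP. Qed.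
End ContraMorphism.

Lemma cmorph_comp (P Q R : contra E) (g : cv P -> cv Q) (h : cv Q -> cv R) :
  is_cmorph g -> is_cmorph h -> is_cmorph (h \o g).
Proof.
move=> Hg Hh; split=> [r p q|F HF] /=; first by rewrite Hg.1 Hh.1.
rewrite !cpiE /= (cmorph_contract Hg (proj2_sig F)) (cmorph_contract Hh) //.
by move=> x y r c d; rewrite (proj2_sig F x y) Hg.1.
Qed.

Lemma Theta_is_functorial : Theta_is_functor E.
Proof.
split; first by move=> P; apply: ThetaMod_kmod.
split; [move=> P Q g Hg; split|split].
- move=> x r p q; apply: val_inj.
  by rewrite (val_Theta_mor Hg) !linearP /= Hg.1 !(val_Theta_mor Hg).
- move=> x y f m; apply: val_inj.
  by rewrite (val_Theta_mor Hg) !(val_mact LF) (val_Theta_mor Hg) (cmorph_ev_act Hg).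
- by move=> P x p; rewrite /Theta_mor valKd.
- move=> P Q R g h Hg Hh x p; apply: val_inj.
  by rewrite (val_Theta_mor (cmorph_comp Hg Hh)) !(val_Theta_mor _).
Qed.

Lemma Theta_is_faithful : Theta_faithful E.
Proof.
move=> P Q g1 g2 H1 H2 g12 p.
rewrite -(contract_idempotents LF p) (cmorph_contract H1) ?(cmorph_contract H2); try exact: linfam_ev.
apply: eq_contract => x y c; rewrite (linear_funZ H1.1) (linear_funZ H2.1); congr (_ *: _).
have := congr1 val (g12 x (theta_proj x p)).
by rewrite !(val_Theta_mor _) // val_theta_proj.
Qed.

Section Full.
Variables (P Q : contra E) (eta : forall x, ThetaT P x -> ThetaT Q x).
Hypothesis eta_morph : @is_kmorph _ _ (ThetaMod P) (ThetaMod Q) eta.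

(* [eta_morph] is phrased over [Mv (ThetaMod _)], through which rewriting
   does not see the [ThetaT] structures; these restate what is needed. *)
Let eta0 x : eta (0 : ThetaT P x) = 0.
Proof. exact: linear_fun0 (eta_morph.1 x). Qed.

Let eta_theta_proj_lin x : linear (fun p => eta (theta_proj x p)).
Proof. by move=> r p q /=; rewrite (theta_proj_lin LF); apply: eta_morph.1. Qed.

(* The components of [eta], glued along the decomposition [contract_idempotents]. *)
Definition glue (p : cv P) : cv Q :=
  contract (fun x y (c : C x y) => (c (delta (idm x) x y) : k) *: val (eta (theta_proj x p))).

Lemma glue_lin : linear glue.
Proof.
move=> r p q; rewrite /glue -contract_lin; try exact: linfam_ev.
by apply: eq_contract => x y c; rewrite eta_theta_proj_lin linearP.
Qed.

Lemma glue_val x (m : ThetaT P x) : glue (val m) = val (eta m).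
Proof.
rewrite /glue -[RHS](ev_act_idm_ThetaT LF); apply: eq_contract => y b c.
have [yx|yx] := pselect (y = x); first by subst y; rewrite theta_proj_val.
have -> : eta (theta_proj y (val m)) = 0.
  by rewrite (theta_proj_orth LF); [apply: eta0|apply: nesym].
by rewrite (delta0l _ _ (nesym yx)) !linear0 scale0r.
Qed.

Lemma ev_act_glue a q : ev_act (delta (idm a)) (glue q) = val (eta (theta_proj a q)).
Proof. by rewrite /glue (ev_act_idm_diag LF) (ev_act_idm_ThetaT LF). Qed.

Lemma glue_cmorph : is_cmorph glue.
Proof.
split=> [|[f Hf] Hgf]; first exact: glue_lin.
rewrite !cpiE /= -[RHS](contract_idempotents LF) {1}/glue.
apply: eq_contract => x y c; congr (_ *: _).
rewrite (ev_act_idm_contract LF _ Hgf) theta_proj_contract // (linear_fun_sum (eta_morph.1 x)).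
rewrite val_ThetaT_sum; apply: eq_bigr => a _; rewrite (linear_fun_sum (eta_morph.1 x)).
rewrite val_ThetaT_sum; apply: eq_bigr => i _.
by rewrite eta_morph.2 (val_mact LF) -ev_act_glue (ev_act_delta_comp LF) compm1.
Qed.
End Full.

Lemma Theta_is_full : Theta_full E.
Proof.
move=> P Q eta eta_morph; exists (glue eta); split=> [|x p]; first exact: glue_cmorph.
by apply: val_inj; rewrite (val_Theta_mor (glue_cmorph eta_morph)) glue_val.
Qed.
End ThetaMorphisms.

(** * Essential surjectivity: the product contramodule *)

Definition prodmod (k : fieldType) (E : kcat k) (M : kmod E) := forall x : Obj E, Mv M x.

HB.instance Definition _ (k : fieldType) (E : kcat k) (M : kmod E) :=
  gen_eqMixin (prodmod M).
HB.instance Definition _ (k : fieldType) (E : kcat k) (M : kmod E) :=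
  gen_choiceMixin (prodmod M).

Section ProductModule.
Variables (k : fieldType) (E : kcat k) (M : kmod E).
Local Notation T := (prodmod M).

Lemma prodmod_addA : associative (fun f g : T => fun x => f x + g x).
Proof. by move=> f g h; apply: functional_extensionality_dep => x; rewrite addrA. Qed.

Lemma prodmod_addC : commutative (fun f g : T => fun x => f x + g x).
Proof. by move=> f g; apply: functional_extensionality_dep => x; rewrite addrC. Qed.

Lemma prodmod_add0 : left_id (fun x => 0 : Mv M x) (fun f g : T => fun x => f x + g x).
Proof. by move=> f; apply: functional_extensionality_dep => x; rewrite add0r. Qed.

Lemma prodmod_addN : left_inverse (fun x => 0 : Mv M x) (fun (f : T) x => - f x)
  (fun f g : T => fun x => f x + g x).
Proof. by move=> f; apply: functional_extensionality_dep => x; rewrite addNr. Qed.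
End ProductModule.

HB.instance Definition _ (k : fieldType) (E : kcat k) (M : kmod E) :=
  GRing.isZmodule.Build (prodmod M)
    (@prodmod_addA _ _ M) (@prodmod_addC _ _ M) (@prodmod_add0 _ _ M) (@prodmod_addN _ _ M).

Section ProductLmodule.
Variables (k : fieldType) (E : kcat k) (M : kmod E).
Local Notation T := (prodmod M).
Local Notation scale := (fun (a : k) (f : T) => (fun x => a *: f x) : T).

Lemma prodmod_scaleA a b (f : T) : scale a (scale b f) = scale (a * b) f.
Proof. by apply: functional_extensionality_dep => x; rewrite scalerA. Qed.

Lemma prodmod_scale1 : left_id 1 scale.
Proof. by move=> f; apply: functional_extensionality_dep => x; rewrite scale1r. Qed.

Lemma prodmod_scaleDr : right_distributive scale +%R.
Proof. by move=> a f g; apply: functional_extensionality_dep => x; rewrite scalerDr. Qed.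

Lemma prodmod_scaleDl (f : T) a b : scale (a + b) f = scale a f + scale b f.
Proof. by apply: functional_extensionality_dep => x; rewrite scalerDl. Qed.
End ProductLmodule.

HB.instance Definition _ (k : fieldType) (E : kcat k) (M : kmod E) :=
  GRing.Zmodule_isLmodule.Build k (prodmod M)
    (@prodmod_scaleA _ _ M) (@prodmod_scale1 _ _ M) (@prodmod_scaleDr _ _ M)
    (@prodmod_scaleDl _ _ M).

Section ProductContramodule.
Variables (k : fieldType) (E : kcat k).
Local Notation Obj := (Obj E).
Local Notation Hom := (@Defs.Hom _ E).
Local Notation C := (@Defs.C _ E).
Hypothesis LF : lower_finite E.
Variable M : kmod E.
Hypothesis M_kmod : is_kmod M.
Local Notation T := (prodmod M).

Let mact_linl (x y : Obj) (m : Mv M x) : linear (fun f : Hom x y => mact f m) := M_kmod.1 x y m.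
Let mact_lin (x y : Obj) (f : Hom x y) : linear (mact f) := M_kmod.2.1 x y f.

Lemma prodmodDZE a (f g : T) x : (a *: f + g) x = a *: f x + g x.
Proof. by []. Qed.

Lemma prodmodZE a (f : T) x : (a *: f) x = a *: f x.
Proof. by []. Qed.

Lemma prodmod_sumE (I : Type) (r : seq I) (F : I -> T) x :
  (\sum_(i <- r) F i) x = \sum_(i <- r) F i x.
Proof. by elim: r => [|i r IH]; rewrite ?big_nil // !big_cons -IH. Qed.

Lemma mact_expand (x y : Obj) (f : Hom x y) (m : Mv M x) :
  mact f m = \sum_i (dualb i f : k) *: mact (bvec i : Hom x y) m.
Proof.
rewrite {1}(coord_expand f) (linear_fun_sum (mact_linl m)).
by apply: eq_bigr => i _; rewrite (linear_funZ (mact_linl m)).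
Qed.

(* [F] is paired with the canonical elements [\sum_i bvec i (x) dualb i] of the
   [Hom x y (x) C x y], [x] below [y], acting through [M]. *)
Definition prod_contract (F : LinFam E T) : T := fun y =>
  \sum_(x <- below LF y) \sum_(i < \dim (fullv : {vspace Hom x y}))
     mact (bvec i : Hom x y) (sval F x y (dualb i) x).

Lemma prod_contract_lin (a : k) (F G : LinFam E T)
    (H : linfam (fun x y c => a *: sval F x y c + sval G x y c)) :
  prod_contract (exist _ _ H) = a *: prod_contract F + prod_contract G.
Proof.
apply: functional_extensionality_dep => y; rewrite /prod_contract /= prodmodDZE.
rewrite scaler_sumr -big_split; apply: eq_bigr => x _.
rewrite scaler_sumr -big_split; apply: eq_bigr => i _.
by rewrite prodmodDZE mact_lin.
Qed.

Lemma prod_contract_counit (p : T) : cdot prod_contract (eps E) p = p.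
Proof.
apply: functional_extensionality_dep => y; rewrite /cdot /prod_contract /=.
rewrite (big_uniq_single (j := y)) ?(below_uniq LF) //; first last.
- move=> x /eqP xy; rewrite big1 // => i _.
  by rewrite (delta0r _ _ xy) linear0 scale0r (linear_fun0 (mact_lin _)).
- exact/(mem_below LF)/prec_refl.
rewrite deltaE -[RHS](M_kmod.2.2.1 y) [RHS]mact_expand; apply: eq_bigr => i _.
exact: (linear_funZ (mact_lin _)).
Qed.

Lemma prod_contract_assoc (F : forall x y, C x y -> forall a b, C a b -> T)
    (HF1 : forall x y c, linfam (F x y c))
    (H2 : linfam (fun x y c => prod_contract (exist _ _ (HF1 x y c))))
    (H3 : linfam (fmu F)) :
  prod_contract (exist _ _ H2) = prod_contract (exist _ _ H3).
Proof.
apply: functional_extensionality_dep => y.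
pose G z w := \sum_(j < \dim (fullv : {vspace Hom z y}))
  \sum_(i < \dim (fullv : {vspace Hom w z}))
    mact (comp (bvec j) (bvec i)) (F z y (dualb j) w z (dualb i) w).
transitivity (\sum_(z <- below LF y) \sum_(w <- below LF z) G z w).
  rewrite /prod_contract /=; apply: eq_bigr => z _; rewrite exchange_big /=.
  apply: eq_bigr => j _; rewrite (linear_fun_sum (mact_lin _)); apply: eq_bigr => w _.
  rewrite (linear_fun_sum (mact_lin _)); apply: eq_bigr => i _.
  by rewrite M_kmod.2.2.2.
rewrite (exchange_big_below LF) /prod_contract /=; apply: eq_bigr => w _.
under [RHS]eq_bigr do rewrite /fmu prodmod_sumE (linear_fun_sum (mact_lin _)).
rewrite [RHS]exchange_big; apply: eq_bigr => z _.
under [RHS]eq_bigr do rewrite prodmod_sumE (linear_fun_sum (mact_lin _)).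
rewrite /G exchange_big [RHS]exchange_big; apply: eq_bigr => i _.
under [RHS]eq_bigr do rewrite prodmod_sumE (linear_fun_sum (mact_lin _)).
rewrite [RHS]exchange_big; apply: eq_bigr => j _.
rewrite mact_expand; apply: eq_bigr => l _.
by rewrite prodmodZE (linear_funZ (mact_lin _)).
Qed.

Lemma prod_contract_is_contra : is_contra prod_contract.
Proof.
split; [exact: prod_contract_lin|split; [exact: prod_contract_counit|]].
by move=> F HF1 _ H2 H3; apply: prod_contract_assoc.
Qed.

Definition prod_contra : contra E := Contra prod_contract_is_contra.
Local Notation evP := (@ev_act _ _ prod_contra).

Lemma ev_act_prod_at (x y : Obj) (f : Hom x y) (q : T) : (evP (delta f) q : T) y = mact f (q x).
Proof.
rewrite /ev_act (contractE (linfam_ev _ _)) /= /prod_contract /=.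
have [xy|nxy] := pselect (prec x y); last first.
  have [->|/hom_prec//] := eqVneq f 0.
  rewrite (linear_fun0 (mact_linl _)) big1 // => a _; rewrite big1 // => i _.
  by rewrite delta0 linear0 prodmodZE scale0r (linear_fun0 (mact_lin _)).
rewrite (big_uniq_single (j := x)) ?(below_uniq LF) //; first last.
- move=> a /eqP ax; rewrite big1 // => i _.
  by rewrite (delta0l _ _ (nesym ax)) linear0 prodmodZE scale0r (linear_fun0 (mact_lin _)).
- exact/(mem_below LF).
rewrite deltaE [RHS]mact_expand; apply: eq_bigr => i _.
by rewrite prodmodZE (linear_funZ (mact_lin _)).
Qed.

Lemma ev_act_prod_off (x y : Obj) (f : Hom x y) (q : T) b : y <> b -> (evP (delta f) q : T) b = 0.
Proof.
move=> yb; rewrite /ev_act (contractE (linfam_ev _ _)) /= /prod_contract /=.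
rewrite big1 // => a _; rewrite big1 // => i _.
by rewrite (delta0r _ _ yb) linear0 prodmodZE scale0r (linear_fun0 (mact_lin _)).
Qed.

Definition prod_single (x : Obj) (m : Mv M x) : T := fun y =>
  if excluded_middle_informative (x = y) is left e then eq_rect x (Mv M) m y e else 0.

Lemma prod_single_at x (m : Mv M x) : prod_single m x = m.
Proof.
rewrite /prod_single; case: excluded_middle_informative => [e|[]] //.
by rewrite (Prop_irrelevance e erefl).
Qed.

Lemma prod_single_off x (m : Mv M x) y : x <> y -> prod_single m y = 0.
Proof. by rewrite /prod_single; case: excluded_middle_informative. Qed.

Lemma prod_single_lin x : linear (@prod_single x).
Proof.
move=> r m n; apply: functional_extensionality_dep => y; rewrite prodmodDZE.
have [<-|xy] := pselect (x = y); first by rewrite !prod_single_at.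
by rewrite !prod_single_off // scaler0 addr0.
Qed.

Lemma ev_act_prod_single (x y : Obj) (f : Hom x y) (m : Mv M x) :
  evP (delta f) (prod_single m) = prod_single (mact f m).
Proof.
apply: functional_extensionality_dep => b.
have [<-|yb] := pselect (y = b); first by rewrite ev_act_prod_at !prod_single_at.
by rewrite ev_act_prod_off // prod_single_off.
Qed.

Lemma prod_single_thetaS x (m : Mv M x) : prod_single m \in @thetaS _ _ prod_contra x.
Proof. by apply/(mem_thetaS LF); rewrite ev_act_prod_single M_kmod.2.2.1. Qed.

Lemma Theta_prod_contra_iso : exists (eta : forall x, ThetaT prod_contra x -> Mv M x)
    (zeta : forall x, Mv M x -> ThetaT prod_contra x),
  @is_kmorph _ _ (ThetaMod prod_contra) M eta /\ @is_kmorph _ _ M (ThetaMod prod_contra) zeta /\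
  (forall x p, zeta x (eta x p) = p) /\ (forall x m, eta x (zeta x m) = m).
Proof.
pose eta x (p : ThetaT prod_contra x) : Mv M x := (val p : T) x.
pose zeta x (m : Mv M x) : ThetaT prod_contra x :=
  insubd (0 : ThetaT prod_contra x) (prod_single m).
have val_zeta x m : val (zeta x m) = prod_single m by rewrite insubdK //; apply: prod_single_thetaS.
exists eta, zeta; split; [|split; [|split]].
- split=> [x r p q //|x y f m].
  by rewrite /eta (val_mact LF) ev_act_prod_at.
- split=> [x r m n|x y f m]; apply: val_inj.
    by rewrite linearP /= !val_zeta prod_single_lin.
  by rewrite (val_mact LF) !val_zeta ev_act_prod_single.
- move=> x p; apply: val_inj; rewrite val_zeta; apply: functional_extensionality_dep => b.
  have [<-|xb] := pselect (x = b); first by rewrite prod_single_at.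
  by rewrite prod_single_off // -(ev_act_idm_ThetaT LF p) ev_act_prod_off.
- by move=> x m; rewrite /eta val_zeta prod_single_at.
Qed.
End ProductContramodule.

Theorem proposition7p5 (k : fieldType) (E : kcat k) :
  lower_finite E -> Theta_equivalence E.
Proof.
move=> LF; split; first exact: Theta_is_functorial.
split; first exact: Theta_is_faithful.
split; first exact: Theta_is_full.
by move=> M M_kmod; exists (prod_contra LF M_kmod); apply: Theta_prod_contra_iso.
Qed.
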